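(* Let $P=(p_1,\dots,p_n)$ be points in $\mathbb{R}^d$, $k\ge1$, and $\mathcal{F}$ a constraint for $k$-CMedian. Let $\lambda\ge1$ and let $\mathcal{C}=\{c_1,\dots,c_k\}$ be the centers (median points) of a $\lambda$-approximate solution of the ordinary (unconstrained) $k$-median problem on $P$. Then $[\mathcal{C}]^k=\mathcal{C}\times\cdots\times\mathcal{C}$ contains a $k$-tuple $(q_1,\dots,q_k)$ for which some $(S_1,\dots,S_k)\in\mathcal{F}$ satisfies $\frac1n\sum_{j=1}^k\sum_{i\in S_j}\|p_i-q_j\|\le(3\lambda+2)\mu_{opt}$.
   Context: A constraint for $k$-CMedian is a nonempty family $\mathcal{F}$ of ordered partitions $(S_1,\dots,S_k)$ of $\{1,\dots,n\}$ into $k$ parts; $\mu_{opt}=\min_{(S_j)\in\mathcal{F}}\min_{c'_1,\dots,c'_k\in\mathbb{R}^d}\frac1n\sum_j\sum_{i\in S_j}\|p_i-c'_j\|$. The unconstrained $k$-median cost of a $k$-point set $\mathcal{C}$ is $\omega=\frac1n\sum_i\min_{c\in\mathcal{C}}\|p_i-c\|$, and $\mathcal{C}$ is $\lambda$-approximate if $\omega$ is at most $\lambda$ times the minimum of this cost over all $k$-point sets. *)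

From HB Require Import structures.
From mathcomp Require Import all_boot all_order all_algebra.
From mathcomp Require Import classical_sets reals.
Set Implicit Arguments. Unset Strict Implicit. Unset Printing Implicit Defensive.
Import Order.TTheory GRing.Theory Num.Theory.
Local Open Scope ring_scope.
Local Open Scope classical_set_scope.

Definition enorm {R : realType} {d : nat} (v : 'rV[R]_d) : R :=
  Num.sqrt (\sum_(i < d) v ord0 i ^+ 2).

(* An ordered partition (S_1,...,S_k) of {1..n} is encoded by its assignment
   sigma : 'I_n -> 'I_k, with S_j = [set i | sigma i == j]. *)

Definition ccost {R : realType} {n d k : nat} (p : 'I_n -> 'rV[R]_d)
  (sigma : {ffun 'I_n -> 'I_k}) (c : 'I_k -> 'rV[R]_d) : R :=
  (n%:R)^-1 * \sum_(j < k) \sum_(i < n | sigma i == j) enorm (p i - c j).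

Definition mu_opt {R : realType} {n d k : nat} (p : 'I_n -> 'rV[R]_d)
  (F : {set {ffun 'I_n -> 'I_k}}) : R :=
  inf [set x : R | exists sigma, exists c : 'I_k -> 'rV[R]_d,
                     sigma \in F /\ x = ccost p sigma c].

(* unconstrained k-median cost omega of the center set {c_1..c_k}:
   (1/n) sum_i min_j ||p_i - c_j|| (min of a finite nonempty set, k >= 1). *)
Definition kmed_cost {R : realType} {n d k : nat} (p : 'I_n -> 'rV[R]_d)
  (c : 'I_k -> 'rV[R]_d) : R :=
  (n%:R)^-1 * \sum_(i < n) inf (range (fun j : 'I_k => enorm (p i - c j))).

Definition kmed_opt {R : realType} {n d : nat} (k : nat) (p : 'I_n -> 'rV[R]_d) : R :=
  inf [set x : R | exists c : 'I_k -> 'rV[R]_d, x = kmed_cost p c].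

Definition lambda_approx {R : realType} {n d k : nat} (p : 'I_n -> 'rV[R]_d)
  (lambda : R) (c : 'I_k -> 'rV[R]_d) : Prop :=
  kmed_cost p c <= lambda * kmed_opt k p.

From HB Require Import structures.
From mathcomp Require Import boolp classical_sets reals.
From mathcomp Require Import all_boot all_order all_algebra ring lra.
Import Order.TTheory GRing.Theory Num.Theory.
Set Implicit Arguments.
Unset Strict Implicit.
Unset Printing Implicit Defensive.
Local Open Scope ring_scope.

(* Take any constrained solution (sigma, c') and snap each c'_j to its nearest
   point of C.  For p in the cluster of c'_j, the triangle inequality through
   c'_j and through the point of C nearest to p gives
   |p - snap c'_j| <= 2 |p - c'_j| + d(p, C).  Summing, the snapped solution
   costs at most 2 cost(sigma, c') + omega <= (lambda + 2) cost(sigma, c'),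
   because the unconstrained optimum is below every constrained cost.  A
   minimizer over the finitely many pairs (snap map, sigma) therefore costs at
   most (lambda + 2) mu_opt <= (3 lambda + 2) mu_opt. *)

Lemma CauchySchwarz_sum (R : realDomainType) (I : finType) (a b : I -> R) :
  (\sum_i a i * b i) ^+ 2 <= (\sum_i a i ^+ 2) * (\sum_i b i ^+ 2).
Proof.
have double_sum (u v : I -> R) :
    (\sum_i u i) * (\sum_j v j) = \sum_i \sum_j u i * v j.
  by rewrite big_distrl; apply: eq_bigr => i _; rewrite big_distrr.
have lagrange : \sum_i \sum_j (a i * b j - a j * b i) ^+ 2 =
    (\sum_i a i ^+ 2) * (\sum_j b j ^+ 2)
    + (\sum_i b i ^+ 2) * (\sum_j a j ^+ 2)
    - 2 * ((\sum_i a i * b i) * (\sum_j a j * b j)).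
  rewrite !double_sum mulr_sumr -big_split -sumrB; apply: eq_bigr => i _ /=.
  rewrite mulr_sumr -big_split -sumrB; apply: eq_bigr => j _ /=; ring.
have : 0 <= \sum_i \sum_j (a i * b j - a j * b i) ^+ 2.
  by apply: sumr_ge0 => i _; apply: sumr_ge0 => j _; apply: sqr_ge0.
rewrite lagrange [(\sum_i b i ^+ 2) * _]mulrC -expr2; lra.
Qed.

Section EuclideanNorm.
Variables (R : realType) (d : nat).
Implicit Types u v w : 'rV[R]_d.

Lemma enorm_ge0 u : 0 <= enorm u.
Proof. exact: sqrtr_ge0. Qed.

Lemma enormN u : enorm (- u) = enorm u.
Proof. by congr Num.sqrt; apply: eq_bigr => i _; rewrite mxE sqrrN. Qed.

Lemma enorm_distC u v : enorm (u - v) = enorm (v - u).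
Proof. by rewrite -enormN opprB. Qed.

Lemma ler_enormD u v : enorm (u + v) <= enorm u + enorm v.
Proof.
rewrite /enorm; set A := \sum_i u ord0 i ^+ 2; set B := \sum_i v ord0 i ^+ 2.
have A_ge0 : 0 <= A by apply: sumr_ge0 => i _; apply: sqr_ge0.
have B_ge0 : 0 <= B by apply: sumr_ge0 => i _; apply: sqr_ge0.
have sqr_sum :
    \sum_i (u + v) ord0 i ^+ 2 = A + B + 2 * \sum_i u ord0 i * v ord0 i.
  rewrite /A /B mulr_sumr -!big_split /=.
  by apply: eq_bigr => i _; rewrite mxE; ring.
have inner_le : \sum_i u ord0 i * v ord0 i <= Num.sqrt A * Num.sqrt B.
  rewrite -sqrtrM // (le_trans (ler_norm _)) // -sqrtr_sqr ler_wsqrtr //.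
  exact: CauchySchwarz_sum.
rewrite -(ger0_norm (addr_ge0 (sqrtr_ge0 A) (sqrtr_ge0 B))) -sqrtr_sqr.
rewrite ler_wsqrtr // sqr_sum sqrrD !sqr_sqrtr //; lra.
Qed.

Lemma ler_edistD u v w : enorm (v - w) <= enorm (v - u) + enorm (u - w).
Proof.
by rewrite (_ : v - w = (v - u) + (u - w)) ?ler_enormD // addrA subrK.
Qed.

End EuclideanNorm.

Local Open Scope classical_set_scope.

Lemma inf_range_le (R : realType) (I : Type) (g : I -> R) (b : R) (i : I) :
  (forall j, b <= g j) -> inf (range g) <= g i.
Proof. by move=> gb; apply: ge_inf; [exists b => _ [j _ <-] | exists i]. Qed.

Lemma le_inf_range (R : realType) (I : Type) (g : I -> R) (x : R) (i : I) :
  (forall j, x <= g j) -> x <= inf (range g).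
Proof.
by move=> xg; apply: lb_le_inf; [exists (g i), i | move=> _ [j _ <-]].
Qed.

Section KMedian.
Variables (R : realType) (n d k : nat) (p : 'I_n -> 'rV[R]_d) (j0 : 'I_k).
Implicit Types (F : {set {ffun 'I_n -> 'I_k}}) (sigma : {ffun 'I_n -> 'I_k}).
Implicit Types (c : 'I_k -> 'rV[R]_d) (x y : 'rV[R]_d).

Definition nearest c x : 'I_k := [arg min_(j < j0) enorm (x - c j)]%O.

Lemma enorm_nearest c x j : enorm (x - c (nearest c x)) <= enorm (x - c j).
Proof. by rewrite /nearest; case: arg_minP => // i _; apply. Qed.

Lemma inf_range_nearest c x :
  inf (range (fun j => enorm (x - c j))) = enorm (x - c (nearest c x)).
Proof.
apply/le_anti/andP; split; first by apply: inf_range_le => j; apply: enorm_ge0.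
exact: le_inf_range j0 (enorm_nearest c x).
Qed.

Lemma ccostE sigma c :
  ccost p sigma c = n%:R^-1 * \sum_i enorm (p i - c (sigma i)).
Proof.
rewrite /ccost (exchange_big_dep xpredT) //=; congr (_ * _).
apply: eq_bigr => i _.
by rewrite (big_pred1 (sigma i)) // => j; rewrite eq_sym.
Qed.

Lemma kmed_costE c :
  kmed_cost p c = n%:R^-1 * \sum_i enorm (p i - c (nearest c (p i))).
Proof. by congr (_ * _); apply: eq_bigr => i _; rewrite inf_range_nearest. Qed.

Lemma ccost_ge0 sigma c : 0 <= ccost p sigma c.
Proof.
rewrite ccostE mulr_ge0 ?invr_ge0 //.
by apply: sumr_ge0 => i _; apply: enorm_ge0.
Qed.

Lemma kmed_cost_le_ccost sigma c : kmed_cost p c <= ccost p sigma c.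
Proof.
rewrite kmed_costE ccostE ler_wpM2l ?invr_ge0 //.
by apply: ler_sum => i _; apply: enorm_nearest.
Qed.

Lemma kmed_opt_le_ccost sigma c : kmed_opt k p <= ccost p sigma c.
Proof.
apply: le_trans (kmed_cost_le_ccost sigma c); apply: ge_inf; last by exists c.
exists 0 => _ [c' ->]; rewrite kmed_costE mulr_ge0 ?invr_ge0 //.
by apply: sumr_ge0 => i _; apply: enorm_ge0.
Qed.

Lemma enorm_snap c x y :
  enorm (x - c (nearest c y)) <=
  2 * enorm (x - y) + enorm (x - c (nearest c x)).
Proof.
have := ler_edistD y x (c (nearest c y)).
have := enorm_nearest c y (nearest c x).
have := ler_edistD x y (c (nearest c x)).
rewrite (enorm_distC y x); lra.
Qed.

Lemma ccost_snap c sigma c' :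
  ccost p sigma (fun j => c (nearest c (c' j))) <=
  2 * ccost p sigma c' + kmed_cost p c.
Proof.
rewrite !ccostE kmed_costE mulrCA -mulrDr ler_wpM2l ?invr_ge0 //.
by rewrite mulr_sumr -big_split /=; apply: ler_sum => i _; apply: enorm_snap.
Qed.

Lemma ccost_snap_approx lambda c sigma c' :
  0 <= lambda -> lambda_approx p lambda c ->
  ccost p sigma (fun j => c (nearest c (c' j))) <=
  (lambda + 2) * ccost p sigma c'.
Proof.
move=> lambda_ge0 approx.
have := ler_wpM2l lambda_ge0 (kmed_opt_le_ccost sigma c').
have := ccost_snap c sigma c'.
rewrite /lambda_approx in approx; lra.
Qed.

Lemma le_mu_opt F sigma0 a : sigma0 \in F ->
  (forall sigma c, sigma \in F -> a <= ccost p sigma c) -> a <= mu_opt p F.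
Proof.
move=> F_sigma0 a_le; apply: lb_le_inf => [|_ [sigma [c [F_sigma ->]]]].
  by exists (ccost p sigma0 (fun=> 0)), sigma0, (fun=> 0).
exact: a_le.
Qed.

Lemma mu_opt_ge0 F sigma0 : sigma0 \in F -> 0 <= mu_opt p F.
Proof. by move/le_mu_opt; apply=> sigma c _; apply: ccost_ge0. Qed.

Lemma exists_snap_le_mu_opt F lambda c sigma0 :
  sigma0 \in F -> 0 <= lambda -> lambda_approx p lambda c ->
  exists2 q : {ffun 'I_k -> 'I_k} * {ffun 'I_n -> 'I_k}, q.2 \in F &
    ccost p q.2 (fun j => c (q.1 j)) <= (lambda + 2) * mu_opt p F.
Proof.
move=> F_sigma0 lambda_ge0 approx.
pose G (q : {ffun 'I_k -> 'I_k} * {ffun 'I_n -> 'I_k}) :=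
  ccost p q.2 (fun j => c (q.1 j)).
have [q F_q G_min] :=
  @arg_minP _ _ _ ([ffun j => j], sigma0) (fun q => q.2 \in F) G F_sigma0.
exists q => //; rewrite mulrC -ler_pdivrMr ?ltr_wpDl //.
apply: (le_mu_opt F_sigma0) => sigma c' F_sigma.
rewrite ler_pdivrMr ?ltr_wpDl // mulrC.
apply: le_trans (ccost_snap_approx sigma c' lambda_ge0 approx).
have := G_min ([ffun j => nearest c (c' j)], sigma) F_sigma.
rewrite /G /=; suff -> : (fun j => c ([ffun j => nearest c (c' j)] j)) =
                        (fun j => c (nearest c (c' j))) by [].
by apply/funext => j; rewrite ffunE.
Qed.

End KMedian.

Theorem theorem11 (R : realType) (n d k : nat) (p : 'I_n -> 'rV[R]_d)
  (F : {set {ffun 'I_n -> 'I_k}}) (lambda : R) (c : 'I_k -> 'rV[R]_d) :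
  (1 <= k)%N -> F != set0 -> 1 <= lambda -> lambda_approx p lambda c ->
  exists f : 'I_k -> 'I_k, exists2 sigma, sigma \in F &
    ccost p sigma (fun j => c (f j)) <= (3 * lambda + 2) * mu_opt p F.
Proof.
move=> k_ge1 /set0Pn[sigma0 F_sigma0] lambda_ge1 approx.
have lambda_ge0 : 0 <= lambda by apply: le_trans lambda_ge1.
have [[f sigma] /= F_sigma snap_le] :=
  exists_snap_le_mu_opt (Ordinal k_ge1) F_sigma0 lambda_ge0 approx.
exists f, sigma => //; apply: le_trans snap_le _.
by apply: ler_wpM2r; [exact: mu_opt_ge0 F_sigma0 | lra].
Qed.
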